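(* Let $d\ge4$ and $1\le p<d/2$ be integers. Every critical point of $\varphi_0$ in the interior of $K_0$ lies on the curve $\tilde{\mathbf{z}}:(0,\infty)\to K_0$, $x\mapsto(\tilde z_{j01}(x),\tilde z_{j10}(x))_{j\in[p]}$, where $$\tilde z_{j01}(x)=\tilde z_{j10}(x)=\frac{\tau_jx^j}{2\theta(x)}.$$ Moreover, for $x>0$, the point $\tilde{\mathbf{z}}(x)$ is a critical point of $\varphi_0$ if and only if $x$ is a root of the polynomial $$g(x)=2\bigl(p\theta(x)-\theta_1(x)\bigr)(1+x)-d\,\theta(x).$$
   Context: Let $\tau_j=\binom{d}{p}\binom{p}{j}\binom{d-p}{p-j}$ for $0\le j\le p$, $\theta(t)=\sum_{j=0}^p\tau_jt^j$ and $\theta_1(t)=\sum_{j=1}^pj\tau_jt^j$. Let $K_0\subset\mathbb{R}^{2p}$ be the set of points $(z_{j01},z_{j10})_{j\in[p]}$ with all $z_{j01},z_{j10}\ge0$ and $\sum_{j\in[p]}z_{j01}\le\frac12$, $\sum_{j\in[p]}z_{j10}\le\frac12$; set $z_{001}=\frac12-\sum_{j\in[p]}z_{j01}$ and $z_{010}=\frac12-\sum_{j\in[p]}z_{j10}$. Define $A_0=p-\sum_{j\in[p]}j(z_{j01}+z_{j10})$, $B_0=\frac d2-A_0$, and $$\varphi_0=A_0\log A_0+B_0\log B_0+\sum_{j=0}^p\sum_{(\alpha,\beta)\in\{(0,1),(1,0)\}}\bigl(z_{j\alpha\beta}\log\tau_j-z_{j\alpha\beta}\log z_{j\alpha\beta}\bigr).$$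 (This is the restriction of the function $\varphi$ to the face $z=0$, where all $z_{j00}=z_{j11}=0$.) A critical point is a point of the interior of $K_0$ where the gradient of $\varphi_0$ vanishes. *)

From Stdlib Require Import Reals Lra List.
From Stdlib Require Binomial.
From Coquelicot Require Import Coquelicot.
Open Scope R_scope.

Definition binR (n k : nat) : R := Binomial.C n k.

Definition sum0 (p : nat) (f : nat -> R) : R :=
  fold_right Rplus 0 (map f (seq 0 (S p))).
Definition sum1 (p : nat) (f : nat -> R) : R :=
  fold_right Rplus 0 (map f (seq 1 p)).

Definition tau (d p j : nat) : R := binR d p * binR p j * binR (d - p) (p - j).
Definition theta (d p : nat) (t : R) : R := sum0 p (fun j => tau d p j * t ^ j).
Definition theta1 (d p : nat) (t : R) : R := sum0 p (fun j => INR j * tau d p j * t ^ j)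
  (* the j = 0 term vanishes, so this equals sum_{j=1}^p j tau_j t^j *).

(* A point of R^{2p} is a pair (z01, z10) of coordinate functions; only the
   coordinates j in [p] = {1,...,p} are meaningful. *)
Definition pt := ((nat -> R) * (nat -> R))%type.

Definition z001 (p : nat) (z : pt) : R := / 2 - sum1 p (fst z).
Definition z010 (p : nat) (z : pt) : R := / 2 - sum1 p (snd z).

Definition zfull01 (p : nat) (z : pt) (j : nat) : R :=
  if Nat.eqb j 0 then z001 p z else fst z j.
Definition zfull10 (p : nat) (z : pt) (j : nat) : R :=
  if Nat.eqb j 0 then z010 p z else snd z j.

Definition A0 (p : nat) (z : pt) : R :=
  INR p - sum1 p (fun j => INR j * (fst z j + snd z j)).
Definition B0 (d p : nat) (z : pt) : R := INR d / 2 - A0 p z.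

Definition ent (c w : R) : R := w * ln c - w * ln w.

Definition phi0 (d p : nat) (z : pt) : R :=
  A0 p z * ln (A0 p z) + B0 d p z * ln (B0 d p z)
  + sum0 p (fun j => ent (tau d p j) (zfull01 p z j) + ent (tau d p j) (zfull10 p z j)).

Definition interiorK0 (p : nat) (z : pt) : Prop :=
  (forall j, (1 <= j <= p)%nat -> 0 < fst z j /\ 0 < snd z j)
  /\ sum1 p (fst z) < / 2 /\ sum1 p (snd z) < / 2.

Definition upd (f : nat -> R) (j : nat) (t : R) : nat -> R :=
  fun k => if Nat.eqb k j then t else f k.

Definition grad_zero (d p : nat) (z : pt) : Prop :=
  forall j, (1 <= j <= p)%nat ->
    is_derive (fun t => phi0 d p (upd (fst z) j t, snd z)) (fst z j) 0
    /\ is_derive (fun t => phi0 d p (fst z, upd (snd z) j t)) (snd z j) 0.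

Definition critical (d p : nat) (z : pt) : Prop :=
  interiorK0 p z /\ grad_zero d p z.

Definition ztilde (d p : nat) (x : R) : pt :=
  (fun j => tau d p j * x ^ j / (2 * theta d p x),
   fun j => tau d p j * x ^ j / (2 * theta d p x)).

Definition pt_eq (p : nat) (z w : pt) : Prop :=
  forall j, (1 <= j <= p)%nat -> fst z j = fst w j /\ snd z j = snd w j.

Definition gpoly (d p : nat) (x : R) : R :=
  2 * (INR p * theta d p x - theta1 d p x) * (1 + x) - INR d * theta d p x.

(* Differentiating, the partial derivative in
   z_{j01} is  j (ln B0 - ln A0) + ln (tau_j / z_{j01}) - ln (tau_0 / z_{001}),
   so at a critical point z_{j01} = tau_j x^j z_{001} / tau_0 with x = B0 / A0,
   and likewise for z_{j10}; the constraint on z_{001} then forces the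
   normalisation 1 / (2 theta(x)).  Conversely, on the curve the partial
   derivatives are j (ln B0 - ln (x A0)), and B0 = x A0 is exactly g(x) = 0,
   since g(x) = 2 theta(x) (x A0 - B0) there. *)
From Stdlib Require Import Reals Lra Lia List FunctionalExtensionality.
From Coquelicot Require Import Coquelicot.
Open Scope R_scope.

Definition lsum (l : list nat) (h : nat -> R) : R := fold_right Rplus 0 (map h l).

Lemma sum1_lsum p h : sum1 p h = lsum (seq 1 p) h.
Proof. reflexivity. Qed.

Lemma sum0_split p h : sum0 p h = h 0%nat + sum1 p h.
Proof. reflexivity. Qed.

Lemma lsum_ext l h1 h2 : (forall k, In k l -> h1 k = h2 k) -> lsum l h1 = lsum l h2.
Proof.
  induction l as [|a l IH]; intros H; [reflexivity|].
  unfold lsum; simpl; fold (lsum l h1) (lsum l h2).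
  f_equal; [apply H; simpl; auto|apply IH; intros; apply H; simpl; auto].
Qed.

Lemma lsum_le l h1 h2 : (forall k, In k l -> h1 k <= h2 k) -> lsum l h1 <= lsum l h2.
Proof.
  induction l as [|a l IH]; intros H; unfold lsum; simpl; [lra|].
  apply Rplus_le_compat; [apply H; simpl; auto|apply IH; intros; apply H; simpl; auto].
Qed.

Lemma lsum_plus l h1 h2 : lsum l (fun k => h1 k + h2 k) = lsum l h1 + lsum l h2.
Proof. induction l as [|a l IH]; unfold lsum in *; simpl; [lra|rewrite IH; ring]. Qed.

Lemma lsum_scal l c h : lsum l (fun k => c * h k) = c * lsum l h.
Proof. induction l as [|a l IH]; unfold lsum in *; simpl; [ring|rewrite IH; ring]. Qed.

Lemma lsum_zero l : lsum l (fun _ => 0) = 0.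
Proof. induction l as [|a l IH]; unfold lsum in *; simpl; [reflexivity|rewrite IH; ring]. Qed.

Lemma lsum_nonneg l h : (forall k, In k l -> 0 <= h k) -> 0 <= lsum l h.
Proof. intros H. rewrite <- (lsum_zero l). now apply lsum_le. Qed.

Lemma lsum_seq_indicator s n j c : (s <= j < s + n)%nat ->
  lsum (seq s n) (fun k => if Nat.eqb k j then c else 0) = c.
Proof.
  revert s; induction n as [|n IH]; intros s Hs; [lia|].
  unfold lsum; simpl; fold (lsum (seq (Datatypes.S s) n) (fun k => if Nat.eqb k j then c else 0)).
  destruct (Nat.eqb_spec s j) as [<-|Hsj]; [|rewrite IH; [ring|lia]].
  rewrite (lsum_ext _ _ (fun _ => 0)), lsum_zero; [ring|].
  intros k Hk; apply in_seq in Hk; destruct (Nat.eqb_spec k s); [lia|reflexivity].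
Qed.

Lemma is_derive_lsum l (F : nat -> R -> R) (F' : nat -> R) x :
  (forall k, In k l -> is_derive (F k) x (F' k)) ->
  is_derive (fun t => lsum l (fun k => F k t)) x (lsum l F').
Proof.
  induction l as [|a l IH]; intros H; unfold lsum in *; simpl.
  - now auto_derive.
  - apply (is_derive_plus (K := R_AbsRing) (V := R_NormedModule)).
    + apply H; simpl; auto.
    + apply IH; intros; apply H; simpl; auto.
Qed.

Lemma upd_same f j : upd f j (f j) = f.
Proof. extensionality k. unfold upd. now destruct (Nat.eqb_spec k j) as [->|]. Qed.

Lemma is_derive_sum1_upd p (F : nat -> R -> R) (F' : nat -> R) f j :
  (1 <= j <= p)%nat -> is_derive (F j) (f j) (F' j) ->
  is_derive (fun t => sum1 p (fun k => F k (upd f j t k))) (f j) (F' j).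
Proof.
  intros Hj HF.
  rewrite <- (lsum_seq_indicator 1 p j (F' j)) by lia.
  apply (is_derive_lsum _ (fun k t => F k (upd f j t k))).
  intros k _. unfold upd. destruct (Nat.eqb_spec k j) as [->|].
  - exact HF.
  - now auto_derive.
Qed.

Lemma is_derive_xlnx u x du : is_derive u x du -> 0 < u x ->
  is_derive (fun t => u t * ln (u t)) x ((ln (u x) + 1) * du).
Proof.
  intros Hu Hpos. rewrite Rmult_comm.
  apply (is_derive_comp (fun a => a * ln a) u); [|exact Hu].
  auto_derive; [lra|field; lra].
Qed.

Lemma is_derive_ent c u x du : is_derive u x du -> 0 < u x ->
  is_derive (fun t => ent c (u t)) x ((ln c - ln (u x) - 1) * du).
Proof.
  intros Hu Hpos. rewrite Rmult_comm.
  apply (is_derive_comp (ent c) u); [|exact Hu].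
  unfold ent; auto_derive; [lra|field; lra].
Qed.

Lemma ln_balance_solve (x c h tj t0 : R) (j : nat) :
  0 < x -> 0 < c -> 0 < h -> 0 < tj -> 0 < t0 ->
  INR j * ln x + ln tj - ln h - ln t0 + ln c = 0 -> h = tj * x ^ j * c / t0.
Proof.
  intros Hx Hc Hh Htj Ht0 E.
  assert (Hxj : 0 < x ^ j) by now apply pow_lt.
  apply ln_inv; auto.
  - apply Rdiv_lt_0_compat; auto. repeat apply Rmult_lt_0_compat; auto.
  - rewrite ln_div, !ln_mult, ln_pow; auto; try lra.
    apply Rmult_lt_0_compat; auto.
    repeat apply Rmult_lt_0_compat; auto.
Qed.

Lemma binR_pos n k : 0 < binR n k.
Proof.
  unfold binR, Binomial.C. apply Rdiv_lt_0_compat.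
  - apply INR_fact_lt_0.
  - apply Rmult_lt_0_compat; apply INR_fact_lt_0.
Qed.

Lemma tau_pos d p j : 0 < tau d p j.
Proof. unfold tau. apply Rmult_lt_0_compat; [apply Rmult_lt_0_compat|]; apply binR_pos. Qed.

Lemma A0_swap p f g : A0 p (g, f) = A0 p (f, g).
Proof. unfold A0; simpl. f_equal. apply lsum_ext. intros; ring. Qed.

Lemma B0_swap d p f g : B0 d p (g, f) = B0 d p (f, g).
Proof. unfold B0; now rewrite A0_swap. Qed.

Lemma phi0_split d p z : phi0 d p z =
  A0 p z * ln (A0 p z) + B0 d p z * ln (B0 d p z)
  + ent (tau d p 0) (z001 p z) + ent (tau d p 0) (z010 p z)
  + sum1 p (fun k => ent (tau d p k) (fst z k) + ent (tau d p k) (snd z k)).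
Proof.
  unfold phi0. rewrite sum0_split. unfold zfull01, zfull10 at 1 2; simpl Nat.eqb.
  cbv iota. rewrite !sum1_lsum,
    (lsum_ext _ _ (fun k => ent (tau d p k) (fst z k) + ent (tau d p k) (snd z k))).
  - ring.
  - intros k Hk; apply in_seq in Hk. unfold zfull01, zfull10.
    now destruct (Nat.eqb_spec k 0); [lia|].
Qed.

Lemma phi0_swap d p f g : phi0 d p (g, f) = phi0 d p (f, g).
Proof.
  rewrite !phi0_split, A0_swap, B0_swap. unfold z001, z010; simpl.
  rewrite !sum1_lsum, (lsum_ext _ (fun k => ent _ (g k) + ent _ (f k))
                                  (fun k => ent (tau d p k) (f k) + ent (tau d p k) (g k))).
  - ring.
  - intros; ring.
Qed.

Section Phi0.

Variables d p : nat.
Hypothesis hp1 : (1 <= p)%nat.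
Hypothesis hp2 : (2 * p < d)%nat.

Definition dphi0 (f g : nat -> R) (j : nat) : R :=
  INR j * (ln (B0 d p (f, g)) - ln (A0 p (f, g))) + ln (tau d p j) - ln (f j)
  - ln (tau d p 0) + ln (z001 p (f, g)).

Lemma interiorK0_pos f g : interiorK0 p (f, g) ->
  0 < A0 p (f, g) /\ 0 < B0 d p (f, g) /\ 0 < z001 p (f, g) /\ 0 < z010 p (f, g).
Proof.
  intros [Hpos [H1 H2]]. simpl in *.
  assert (Hle : sum1 p (fun k => INR k * (f k + g k)) <= INR p * (sum1 p f + sum1 p g)).
  { rewrite !sum1_lsum, <- lsum_plus, <- lsum_scal. apply lsum_le.
    intros k Hk; apply in_seq in Hk. destruct (Hpos k) as [a b]; [lia|].
    apply Rmult_le_compat_r; [lra|]. apply le_INR; lia. }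
  assert (Hge : 0 <= sum1 p (fun k => INR k * (f k + g k))).
  { apply lsum_nonneg. intros k Hk; apply in_seq in Hk. destruct (Hpos k) as [a b]; [lia|].
    apply Rmult_le_pos; [apply pos_INR|lra]. }
  assert (HP : 1 <= INR p) by (apply (le_INR 1); lia).
  assert (HD : INR (2 * p) < INR d) by (apply lt_INR; lia).
  rewrite mult_INR in HD. simpl INR in HD at 1.
  unfold B0, z001, z010, A0; simpl. repeat split; nra.
Qed.

Lemma interiorK0_swap f g : interiorK0 p (f, g) -> interiorK0 p (g, f).
Proof.
  intros [Hpos [H1 H2]]. split; [|simpl in *; tauto].
  intros j Hj; apply Hpos in Hj; simpl in *; tauto.
Qed.

Lemma is_derive_phi0_fst f g j : (1 <= j <= p)%nat -> interiorK0 p (f, g) ->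
  is_derive (fun t => phi0 d p (upd f j t, g)) (f j) (dphi0 f g j).
Proof.
  intros Hj Hi.
  destruct (interiorK0_pos f g Hi) as [HA [HB [Hz _]]].
  assert (Hf : 0 < f j) by apply (proj1 Hi j Hj).
  assert (HdA : is_derive (fun t => A0 p (upd f j t, g)) (f j) (- INR j)).
  { unfold A0; simpl. rewrite <- Rminus_0_l.
    apply (is_derive_minus (K := R_AbsRing) (V := R_NormedModule)); [now auto_derive|].
    apply (is_derive_sum1_upd p (fun k a => INR k * (a + g k)) _ f j); [lia|].
    auto_derive; [auto|ring]. }
  assert (HdB : is_derive (fun t => B0 d p (upd f j t, g)) (f j) (INR j)).
  { unfold B0. replace (INR j) with (0 - - INR j) by ring.
    apply (is_derive_minus (K := R_AbsRing) (V := R_NormedModule)); [now auto_derive|exact HdA]. }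
  assert (Hdz : is_derive (fun t => z001 p (upd f j t, g)) (f j) (-1)).
  { unfold z001; simpl. replace (-1) with (0 - 1) by ring.
    apply (is_derive_minus (K := R_AbsRing) (V := R_NormedModule)); [now auto_derive|].
    exact (is_derive_sum1_upd p (fun _ a => a) (fun _ => 1) f j ltac:(lia) (is_derive_id _)). }
  assert (Hds : is_derive (fun t => sum1 p (fun k => ent (tau d p k) (upd f j t k)
                                                    + ent (tau d p k) (g k)))
                          (f j) (ln (tau d p j) - ln (f j) - 1)).
  { apply (is_derive_sum1_upd p (fun k a => ent (tau d p k) a + ent (tau d p k) (g k))
              (fun k => ln (tau d p k) - ln (f k) - 1) f j); [lia|].
    unfold ent; auto_derive; [lra|field; lra]. }
  apply (is_derive_ext (fun t => A0 p (upd f j t, g) * ln (A0 p (upd f j t, g))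
     + B0 d p (upd f j t, g) * ln (B0 d p (upd f j t, g))
     + ent (tau d p 0) (z001 p (upd f j t, g)) + ent (tau d p 0) (z010 p (f, g))
     + sum1 p (fun k => ent (tau d p k) (upd f j t k) + ent (tau d p k) (g k)))).
  { intros t. now rewrite phi0_split. }
  replace (dphi0 f g j) with
    ((ln (A0 p (upd f j (f j), g)) + 1) * - INR j + (ln (B0 d p (upd f j (f j), g)) + 1) * INR j
     + (ln (tau d p 0) - ln (z001 p (upd f j (f j), g)) - 1) * -1 + 0
     + (ln (tau d p j) - ln (f j) - 1))
    by (rewrite upd_same; unfold dphi0; ring).
  apply (is_derive_plus (K := R_AbsRing) (V := R_NormedModule)); [|exact Hds].
  apply (is_derive_plus (K := R_AbsRing) (V := R_NormedModule)); [|now auto_derive].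
  apply (is_derive_plus (K := R_AbsRing) (V := R_NormedModule));
    [apply (is_derive_plus (K := R_AbsRing) (V := R_NormedModule))|].
  - apply (is_derive_xlnx (fun t => A0 p (upd f j t, g))); [exact HdA|now rewrite upd_same].
  - apply (is_derive_xlnx (fun t => B0 d p (upd f j t, g))); [exact HdB|now rewrite upd_same].
  - apply (is_derive_ent _ (fun t => z001 p (upd f j t, g))); [exact Hdz|now rewrite upd_same].
Qed.

Lemma grad_zero_iff f g : interiorK0 p (f, g) ->
  (grad_zero d p (f, g) <->
   forall j, (1 <= j <= p)%nat -> dphi0 f g j = 0 /\ dphi0 g f j = 0).
Proof.
  intros Hi.
  assert (Hd : forall j, (1 <= j <= p)%nat ->
    is_derive (fun t => phi0 d p (upd f j t, g)) (f j) (dphi0 f g j) /\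
    is_derive (fun t => phi0 d p (f, upd g j t)) (g j) (dphi0 g f j)).
  { intros j Hj. split; [now apply is_derive_phi0_fst|].
    apply (is_derive_ext (fun t => phi0 d p (upd g j t, f))); [intros; apply phi0_swap|].
    now apply is_derive_phi0_fst, interiorK0_swap. }
  split; intros G j Hj; destruct (G j Hj) as [G1 G2]; destruct (Hd j Hj) as [D1 D2].
  - apply is_derive_unique in G1, G2, D1, D2. simpl in G1, G2.
    split; [rewrite <- D1; exact G1|rewrite <- D2; exact G2].
  - rewrite G1 in D1; rewrite G2 in D2. split; [exact D1|exact D2].
Qed.

Lemma theta_split x : theta d p x = tau d p 0 + sum1 p (fun k => tau d p k * x ^ k).
Proof. unfold theta. rewrite sum0_split. simpl pow. ring. Qed.

Lemma theta1_split x : theta1 d p x = sum1 p (fun k => INR k * tau d p k * x ^ k).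
Proof. unfold theta1. rewrite sum0_split. simpl INR. ring. Qed.

Lemma sum1_tau_pow_nonneg x : 0 < x -> 0 <= sum1 p (fun k => tau d p k * x ^ k).
Proof.
  intros Hx. apply lsum_nonneg. intros k _.
  apply Rmult_le_pos; [apply Rlt_le, tau_pos|apply pow_le; lra].
Qed.

Lemma theta_pos x : 0 < x -> 0 < theta d p x.
Proof.
  intros Hx. rewrite theta_split.
  pose proof (tau_pos d p 0); pose proof (sum1_tau_pow_nonneg x Hx); lra.
Qed.

Lemma proportional_normalized (h : nat -> R) c x : 0 < x ->
  (forall j, (1 <= j <= p)%nat -> h j = tau d p j * x ^ j * c / tau d p 0) ->
  c = / 2 - sum1 p h ->
  forall j, (1 <= j <= p)%nat -> h j = tau d p j * x ^ j / (2 * theta d p x).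
Proof.
  intros Hx Hh Hc j Hj.
  pose proof (tau_pos d p 0) as Ht0. pose proof (sum1_tau_pow_nonneg x Hx) as HT.
  set (T := sum1 p (fun k => tau d p k * x ^ k)) in *.
  assert (Hs : sum1 p h = c / tau d p 0 * T).
  { unfold T. rewrite !sum1_lsum, <- lsum_scal. apply lsum_ext. intros k Hk; apply in_seq in Hk.
    rewrite Hh by lia. field. lra. }
  assert (Hc2 : c = tau d p 0 / (2 * (tau d p 0 + T))).
  { rewrite Hs in Hc.
    assert (E : c * tau d p 0 = tau d p 0 / 2 - c * T) by (rewrite Hc at 1; field; lra).
    apply (Rmult_eq_reg_r (2 * (tau d p 0 + T))); [|lra].
    replace (tau d p 0 / (2 * (tau d p 0 + T)) * (2 * (tau d p 0 + T))) with (tau d p 0)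
      by (field; lra).
    lra. }
  rewrite theta_split, Hh, Hc2 by exact Hj. fold T. field. lra.
Qed.

Lemma critical_on_ztilde z : critical d p z -> exists x, 0 < x /\ pt_eq p z (ztilde d p x).
Proof.
  destruct z as [f g]; intros [Hi G].
  destruct (interiorK0_pos f g Hi) as [HA [HB [Hz1 Hz2]]].
  rewrite (grad_zero_iff f g Hi) in G.
  set (x := B0 d p (f, g) / A0 p (f, g)).
  assert (Hx : 0 < x) by (apply Rdiv_lt_0_compat; auto).
  assert (Hln : ln (B0 d p (f, g)) - ln (A0 p (f, g)) = ln x)
    by (unfold x; rewrite ln_div; auto).
  exists x; split; [exact Hx|].
  intros j Hj. simpl. destruct (proj1 Hi j Hj) as [Hf Hg]. simpl in Hf, Hg.
  split.
  - apply (proportional_normalized f (z001 p (f, g))); auto.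
    intros k Hk. destruct (G k Hk) as [Gk _]. destruct (proj1 Hi k Hk) as [Hfk _].
    unfold dphi0 in Gk. rewrite Hln in Gk.
    apply ln_balance_solve; auto using tau_pos.
  - apply (proportional_normalized g (z010 p (f, g))); auto.
    intros k Hk. destruct (G k Hk) as [_ Gk]. destruct (proj1 Hi k Hk) as [_ Hgk].
    unfold dphi0 in Gk. rewrite A0_swap, B0_swap, Hln in Gk.
    apply ln_balance_solve; auto using tau_pos.
Qed.

Section Curve.

Variable x : R.
Hypothesis hx : 0 < x.

Let h (j : nat) : R := tau d p j * x ^ j / (2 * theta d p x).

Lemma ztilde_eq : ztilde d p x = (h, h).
Proof. reflexivity. Qed.

Lemma ztilde_coord_pos j : 0 < h j.
Proof.
  unfold h. pose proof (theta_pos x hx). apply Rdiv_lt_0_compat; [|lra].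
  apply Rmult_lt_0_compat; [apply tau_pos|now apply pow_lt].
Qed.

Lemma z001_ztilde : z001 p (h, h) = tau d p 0 / (2 * theta d p x).
Proof.
  pose proof (theta_pos x hx). unfold z001; simpl.
  rewrite sum1_lsum, (lsum_ext _ h (fun k => / (2 * theta d p x) * (tau d p k * x ^ k))),
    lsum_scal, <- sum1_lsum, (theta_split x) at 1 by (intros; unfold h; field; lra).
  rewrite theta_split in *. field. lra.
Qed.

Lemma interiorK0_ztilde : interiorK0 p (h, h).
Proof.
  pose proof (theta_pos x hx). pose proof (tau_pos d p 0).
  assert (Hz : 0 < z001 p (h, h)) by (rewrite z001_ztilde; apply Rdiv_lt_0_compat; lra).
  unfold z001 in Hz; simpl in Hz.
  split; [intros; split; apply ztilde_coord_pos|simpl; lra].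
Qed.

Lemma A0_ztilde : A0 p (h, h) = INR p - theta1 d p x / theta d p x.
Proof.
  pose proof (theta_pos x hx). unfold A0; simpl. f_equal.
  rewrite theta1_split, !sum1_lsum, Rdiv_def, Rmult_comm, <- lsum_scal.
  apply lsum_ext. intros; unfold h. field. lra.
Qed.

Lemma gpoly_ztilde : gpoly d p x = 2 * theta d p x * (x * A0 p (h, h) - B0 d p (h, h)).
Proof. pose proof (theta_pos x hx). unfold gpoly, B0. rewrite A0_ztilde. field. lra. Qed.

Lemma dphi0_ztilde j :
  dphi0 h h j = INR j * (ln (B0 d p (h, h)) - ln (x * A0 p (h, h))).
Proof.
  destruct (interiorK0_pos h h interiorK0_ztilde) as [HA _].
  pose proof (theta_pos x hx). pose proof (tau_pos d p j). pose proof (tau_pos d p 0).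
  assert (0 < x ^ j) by now apply pow_lt.
  assert (0 < tau d p j * x ^ j) by now apply Rmult_lt_0_compat.
  unfold dphi0. rewrite z001_ztilde. unfold h.
  rewrite ln_mult, !ln_div, ln_mult, ln_pow by (auto; lra). ring.
Qed.

Lemma critical_ztilde_iff : critical d p (ztilde d p x) <-> gpoly d p x = 0.
Proof.
  pose proof interiorK0_ztilde as Hi.
  destruct (interiorK0_pos h h Hi) as [HA [HB _]].
  assert (HxA : 0 < x * A0 p (h, h)) by now apply Rmult_lt_0_compat.
  pose proof (theta_pos x hx).
  unfold critical. rewrite ztilde_eq, grad_zero_iff, gpoly_ztilde by exact Hi.
  split.
  - intros [_ G]. destruct (G 1%nat) as [G1 _]; [lia|].
    rewrite dphi0_ztilde in G1. simpl INR in G1.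
    assert (E : B0 d p (h, h) = x * A0 p (h, h)) by (apply ln_inv; auto; lra).
    rewrite E; ring.
  - intros E.
    assert (E' : B0 d p (h, h) = x * A0 p (h, h))
      by (apply Rmult_eq_reg_l with (2 * theta d p x); lra).
    split; [exact Hi|]. intros j _. rewrite dphi0_ztilde, E'. split; ring.
Qed.

End Curve.

End Phi0.

Theorem lemmaA5 (d p : nat) (hd : (4 <= d)%nat) (hp1 : (1 <= p)%nat)
    (hp2 : (2 * p < d)%nat) :
  (forall z : pt, critical d p z -> exists x : R, 0 < x /\ pt_eq p z (ztilde d p x))
  /\ (forall x : R, 0 < x -> (critical d p (ztilde d p x) <-> gpoly d p x = 0)).
Proof.
  split.
  - exact (critical_on_ztilde d p hp1 hp2).
  - intros x hx. exact (critical_ztilde_iff d p hp1 hp2 x hx).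
Qed.
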